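(* Let $\mathbb{K}$ be a field containing a primitive $n$-th root of unity $\zeta_n$, let $g\ge1$, and let $(A_1,B_1,\dots,A_g,B_g)\in\operatorname{Sl}_n(\mathbb{K})^{2g}$ satisfy $[A_1,B_1]\cdots[A_g,B_g]=\zeta_n I$, where $[A,B]=ABA^{-1}B^{-1}$. If $Z\in\mathbb{K}^{n\times n}$ commutes with all the $A_i$ and $B_i$, then $Z$ is a scalar multiple of the identity. *)

From HB Require Import structures.
From mathcomp Require Import all_boot all_order all_algebra.
Set Implicit Arguments. Unset Strict Implicit. Unset Printing Implicit Defensive.
Import GRing.Theory.
Local Open Scope ring_scope.

Definition mxcomm (K : fieldType) (n : nat) (A B : 'M[K]_n) : 'M[K]_n :=
  A *m B *m invmx A *m invmx B.

Definition comm_prod (K : fieldType) (n g : nat) (A B : 'I_g -> 'M[K]_n) : 'M[K]_n :=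
  foldr (fun i acc => mxcomm (A i) (B i) *m acc) 1%:M (enum 'I_g).

From HB Require Import structures.
From mathcomp Require Import all_boot all_order all_algebra all_field.
From Stdlib Require Import Classical.
Import GRing.Theory.
Local Open Scope ring_scope.

(* After extending scalars, [Z] has an eigenvalue [lam]. The eigenspace of
   [lam] is a nonzero subspace [V] stable under every [A_i] and [B_i], so
   restricting to [V] turns the relation into one between matrices of size
   [r = rank V]. Commutators have determinant 1, hence [zeta ^+ r = 1], so
   [n] divides [r], which forces [V] to be the whole space and [Z = lam]. *)

Section RestrictToStableSubspace.
Context {F : fieldType} {n : nat} {V : 'M[F]_n}.

Lemma stablemx_invmx (A : 'M[F]_n) :
  A \in unitmx -> stablemx V A -> stablemx V (invmx A).
Proof.
move=> uA VA; have VAV : (V *m A == V)%MS.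
  by rewrite -(mxrank_leqif_eq VA).2 mxrankMfree ?row_free_unit.
by rewrite -[X in (_ <= X)%MS](mulmxK uA) submxMr // (eqmxP VAV).
Qed.

Lemma restrictmxM (A B : 'M[F]_n) : stablemx V A -> stablemx V B ->
  restrictmx V (A *m B) = restrictmx V A *m restrictmx V B.
Proof. by move=> VA VB; rewrite conjmxM // inE stablemx_row_base. Qed.

Lemma det_restrictmx_mxcomm (A B : 'M[F]_n) :
  A \in unitmx -> B \in unitmx -> stablemx V A -> stablemx V B ->
  \det (restrictmx V (mxcomm A B)) = 1.
Proof.
move=> uA uB VA VB.
have det_inv C : C \in unitmx -> stablemx V C ->
    \det (restrictmx V C) * \det (restrictmx V (invmx C)) = 1.
  move=> uC VC; rewrite -det_mulmx -restrictmxM ?stablemx_invmx // mulmxV //.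
  by rewrite conjmx_scalar ?row_base_free // det1.
rewrite /mxcomm !restrictmxM ?stablemxM ?stablemx_invmx // !det_mulmx.
by rewrite -mulrA mulrACA det_inv // det_inv // mulr1.
Qed.

Lemma det_restrictmx_comm_prod {g} (A B : 'I_g -> 'M[F]_n) :
  (forall i, A i \in unitmx) -> (forall i, B i \in unitmx) ->
  (forall i, stablemx V (A i)) -> (forall i, stablemx V (B i)) ->
  \det (restrictmx V (comm_prod A B)) = 1.
Proof.
move=> uA uB VA VB.
pose P M := stablemx V M && (\det (restrictmx V M) == 1).
suff /andP[_ /eqP //] : P (comm_prod A B).
rewrite /comm_prod; elim: (enum 'I_g) => [|i s] /=.
  by rewrite /P stablemxC conjmx_scalar ?row_base_free // det1 eqxx.
rewrite /P => /andP[VM /eqP detM].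
have VC : stablemx V (mxcomm (A i) (B i)).
  by rewrite /mxcomm !stablemxM ?stablemx_invmx.
rewrite /P stablemxM //= restrictmxM // det_mulmx detM mulr1.
by rewrite det_restrictmx_mxcomm ?eqxx.
Qed.

End RestrictToStableSubspace.

Section CommutatorProductScalar.
Context {F : fieldType} {n g : nat} {zeta : F} {A B : 'I_g -> 'M[F]_n}.
Hypothesis zeta_prim : n.-primitive_root zeta.
Hypothesis prodE : comm_prod A B = zeta%:M.
Hypotheses (uA : forall i, A i \in unitmx) (uB : forall i, B i \in unitmx).

Lemma stablemx_comm_prod_row_full (V : 'M[F]_n) :
  (forall i, stablemx V (A i)) -> (forall i, stablemx V (B i)) ->
  V != 0 -> row_full V.
Proof.
move=> VA VB V_neq0.
have : zeta ^+ \rank V = 1.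
  rewrite -(det_restrictmx_comm_prod A B uA uB VA VB) prodE.
  by rewrite conjmx_scalar ?row_base_free // det_scalar.
move/eqP; rewrite -(prim_order_dvd zeta_prim) => n_dvd_r.
by rewrite /row_full eqn_leq rank_leq_col dvdn_leq // lt0n mxrank_eq0.
Qed.

Lemma eigenvalue_comm_prod_scalar {Z : 'M[F]_n} {lam : F} :
  (forall i, comm_mx Z (A i)) -> (forall i, comm_mx Z (B i)) ->
  eigenvalue Z lam -> Z = lam%:M.
Proof.
move=> ZA ZB Z_lam.
have := stablemx_comm_prod_row_full (eigenspace Z lam)
  (fun i => comm_mx_stable_eigenspace lam (ZA i))
  (fun i => comm_mx_stable_eigenspace lam (ZB i)) Z_lam.
by rewrite -sub1mx => /eigenspaceP; rewrite mul1mx scalemx1.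
Qed.

End CommutatorProductScalar.

Lemma exists_monic_irreducible_dvdp {K : fieldType} (q : {poly K}) :
  (1 < size q)%N -> exists2 h : {poly K}, monic_irreducible_poly h & h %| q.
Proof.
move=> q_gt1; have [k] := ubnP (size q); elim: k q q_gt1 => // k IHk q q_gt1.
rewrite ltnS => size_q; have q_neq0 : q != 0 by rewrite -size_poly_gt0 ltnW.
case: (classic (irreducible_poly q)) => [q_irr | q_red].
  have lq_neq0 : (lead_coef q)^-1 != 0 by rewrite invr_eq0 lead_coef_eq0.
  exists ((lead_coef q)^-1 *: q); last by rewrite dvdpZl.
  split; last by rewrite monicE lead_coefZ mulVf ?lead_coef_eq0.
  split=> [|d d_neq1]; first by rewrite size_scale.
  by rewrite dvdpZr // (eqp_rtrans (eqp_scale _ lq_neq0)); apply: q_irr.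
have [d /and3P[dq d_neq1 d_nq]] :
    exists d, [&& d %| q, size d != 1 & ~~ (d %= q)].
  apply: NNPP => no_d; apply: q_red; split=> // d d_neq1 dq.
  by apply/negPn/negP => d_nq; apply: no_d; exists d; rewrite dq d_neq1.
have d_neq0 : d != 0 by apply: contraTneq dq => ->; rewrite dvd0p.
have [||h h_irr hd] := IHk d.
- by rewrite ltn_neqAle eq_sym d_neq1 size_poly_gt0.
- apply: leq_trans size_q.
  by rewrite ltn_neqAle dvdp_leq // andbT (dvdp_size_eqp dq).
- by exists h => //; apply: dvdp_trans hd dq.
Qed.

Lemma root_qpolyX {K : fieldType} {h : {poly K}}
    (h_irr : monic_irreducible_poly h) :
  root (map_poly (qpolyC h) h) ('qX : {poly %/ h with h_irr}).
Proof.
apply/eqP; rewrite -in_qpoly_comp_horner comp_polyXr; apply: val_inj => /=.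
by rewrite (mk_monicE h_irr) Pdiv.RingMonic.rmodpp //; case: h_irr.
Qed.

Lemma eigenvalue_field_extension {K : fieldType} {n} (Z : 'M[K]_n) :
  (0 < n)%N ->
  exists (L : fieldType) (f : {rmorphism K -> L}) (lam : L),
    eigenvalue (map_mx f Z) lam.
Proof.
move=> n_gt0; have := exists_monic_irreducible_dvdp (char_poly Z).
rewrite size_char_poly ltnS => /(_ n_gt0)[h h_irr /dvdpP[q charZ]].
exists {poly %/ h with h_irr}, (qpolyC h), 'qX.
rewrite eigenvalue_root_char -map_char_poly charZ rmorphM rootM.
by rewrite (root_qpolyX h_irr) orbT.
Qed.

Lemma map_comm_prod (K L : fieldType) (f : {rmorphism K -> L}) n g
    (A B : 'I_g -> 'M[K]_n) :
  map_mx f (comm_prod A B) = comm_prod (map_mx f \o A) (map_mx f \o B).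
Proof.
rewrite /comm_prod; elim: (enum 'I_g) => [|i s IHs] /=; first exact: map_mx1.
by rewrite map_mxM IHs /mxcomm !map_mxM !map_invmx.
Qed.

Theorem proposition3p1 (K : fieldType) (n g : nat) (zeta : K)
  (hzeta : n.-primitive_root zeta) (hg : (1 <= g)%N)
  (A B : 'I_g -> 'M[K]_n)
  (hA : forall i, \det (A i) = 1) (hB : forall i, \det (B i) = 1)
  (hprod : comm_prod A B = zeta%:M)
  (Z : 'M[K]_n)
  (hZA : forall i, Z *m A i = A i *m Z) (hZB : forall i, Z *m B i = B i *m Z) :
  exists c : K, Z = c%:M.
Proof.
have [L [f [lam Zf_lam]]] :=
  eigenvalue_field_extension Z (prim_order_gt0 hzeta).
have zetaf : n.-primitive_root (f zeta) by rewrite fmorph_primitive_root.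
have prodf : comm_prod (map_mx f \o A) (map_mx f \o B) = (f zeta)%:M.
  by rewrite -map_comm_prod hprod map_scalar_mx.
have unit_map (M : 'M_n) : \det M = 1 -> map_mx f M \in unitmx.
  by move=> detM; rewrite unitmxE det_map_mx detM rmorph1 unitr1.
have comm_map (M : 'M_n) : Z *m M = M *m Z -> comm_mx (map_mx f Z) (map_mx f M).
  by move=> ZM; rewrite /comm_mx -!map_mxM ZM.
have := eigenvalue_comm_prod_scalar zetaf prodf
  (fun i => unit_map _ (hA i)) (fun i => unit_map _ (hB i))
  (fun i => comm_map _ (hZA i)) (fun i => comm_map _ (hZB i)) Zf_lam.
move/(congr1 is_scalar_mx); rewrite map_mx_is_scalar scalar_mx_is_scalar.
by move/is_scalar_mxP.
Qed.
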